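(* Let $\rho$ be a ray and let $h_0=|\rho|$. Fix one side of $\rho$ (counterclockwise or clockwise), let $\gamma$ be the neighbor of $\rho$ on that side in $\Sigma_{h_0}$, and set $w_s=u_\gamma+s\,u_\rho$ for integers $s\ge 0$. Then for every $h\ge h_0$, a ray $\nu$ is the neighbor of $\rho$ on that side in $\Sigma_h$ if and only if $u_\nu=w_a$ for some $a\ge 0$ such that $|w_a|\le h$ and $|w_s|>h$ for all $s>a$.
   Context: A ray is a half-line $\rho=\mathbb{R}_{\ge 0}v\subset\mathbb{R}^2$ with $v\in\mathbb{Z}^2\setminus\{0\}$; $u_\rho$ is its primitive lattice generator. On $\mathbb{Z}^2$ use the norm $|(x,y)|=\max\{|x|,|y|\}$, and $|\rho|=|u_\rho|$. $\Sigma_h$ is the complete fan whose rays are all rays $\rho$ with $|\rho|\le h$ and whose $2$-dimensional cones are spanned by angularly consecutive such rays. The neighbors of $\rho\in\Sigma_h(1)$ are the two rays of $\Sigma_h$ adjacent to $\rho$ in angular order. *)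

From HB Require Import structures.
From mathcomp Require Import all_boot all_order all_algebra.
Set Implicit Arguments. Unset Strict Implicit. Unset Printing Implicit Defensive.
Import Order.TTheory GRing.Theory Num.Theory.
Local Open Scope ring_scope.

Definition vec := (int * int)%type.

(* A ray is identified with its primitive lattice generator u_rho. *)
Definition primitive (v : vec) : bool := gcdz v.1 v.2 == 1.

Definition nrm (v : vec) : nat := maxn `|v.1|%N `|v.2|%N.

Definition det (u v : vec) : int := u.1 * v.2 - u.2 * v.1.
Definition dot (u v : vec) : int := u.1 * v.1 + u.2 * v.2.

(* side: true = counterclockwise, false = clockwise (mirror image). *)
Definition sdet (ccw : bool) (u v : vec) : int := if ccw then det u v else - det u v.

(* half ccw u v = 0 iff the (ccw or cw) angle from u to v lies in [0, pi),
   and 1 iff it lies in [pi, 2 pi). *)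
Definition half (ccw : bool) (u v : vec) : nat :=
  if (0 < sdet ccw u v) || ((sdet ccw u v == 0) && (0 < dot u v)) then 0%N else 1%N.

(* ang_lt ccw u v1 v2: the angle (measured on the chosen side, in [0, 2pi))
   from u to v1 is strictly smaller than the one from u to v2. *)
Definition ang_lt (ccw : bool) (u v1 v2 : vec) : bool :=
  (half ccw u v1 < half ccw u v2)%N ||
  ((half ccw u v1 == half ccw u v2) && (0 < sdet ccw v1 v2)).

Definition in_fan (h : nat) (v : vec) : bool := primitive v && (nrm v <= h)%N.

Definition is_nbr (ccw : bool) (h : nat) (rho nu : vec) : Prop :=
  [/\ in_fan h rho, in_fan h nu, nu != rho &
      forall v, in_fan h v -> v != rho -> ~~ ang_lt ccw rho v nu].

Definition wvec (gamma rho : vec) (s : nat) : vec :=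
  (gamma.1 + (s%:Z) * rho.1, gamma.2 + (s%:Z) * rho.2).

(* The neighbor [n] of [r] in Sigma_h is characterized by [sdet r n > 0] with no
   ray of Sigma_h strictly inside the cone spanned by [r] and [n].  Such an [n]
   has [sdet r n = 1]: otherwise a lattice point of the half-open parallelogram on
   [r] and [n] lies in the box strictly between them.  Hence [n = gamma + s r] with
   [s >= 0], since [gamma] itself may not lie strictly between [r] and [n]; and
   [w_t] for [t > s] would lie strictly between, so it is outside the box.
   Conversely, every lattice vector strictly between [r] and [w_a] has the form
   [y gamma + c r] with [y >= 1] and [c >= a + 1]; since [r] and [gamma] lie in a
   common closed quadrant, it dominates [w_(a+1)] coordinatewise, so it is
   outside the box as soon as [w_(a+1)] is. *)

From Pilot Require Import Defs.
From HB Require Import structures.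
From mathcomp Require Import all_boot all_order all_algebra.
From mathcomp Require Import zify ring.
Import Order.TTheory GRing.Theory Num.Theory.

Set Implicit Arguments. Unset Strict Implicit.
Local Open Scope ring_scope.

Lemma primitive_dvd (v : vec) (d : int) :
  primitive v -> (d %| v.1)%Z -> (d %| v.2)%Z -> `|d|%N = 1%N.
Proof. by move=> /eqP pv d1 d2; have := dvdz_gcd d v.1 v.2; rewrite pv d1 d2 dvdz1 => /eqP. Qed.

Lemma primitiveP (v : vec) : reflect (exists a b, a * v.1 + b * v.2 = 1) (primitive v).
Proof.
apply: (iffP (coprimezP v.1 v.2)) => [[[a b] /= e]|[a [b e]]]; first by exists a, b.
by exists (a, b).
Qed.

Lemma primitive_neq0 (v : vec) : primitive v -> v.1 != 0 \/ v.2 != 0.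
Proof. by case/primitiveP=> a [b e]; case: (eqVneq v.1 0) => [v1|]; [right; lia|left]. Qed.

Lemma nrm_leP (v : vec) (h : nat) :
  (nrm v <= h)%N <-> `|v.1| <= h%:Z /\ `|v.2| <= h%:Z.
Proof. by rewrite /nrm; split; lia. Qed.

Lemma nrm_le_norm (u v : vec) :
  `|u.1| <= `|v.1| -> `|u.2| <= `|v.2| -> (nrm u <= nrm v)%N.
Proof. by rewrite /nrm; lia. Qed.

Lemma in_fan_gt0 (h : nat) (v : vec) : in_fan h v -> (0 < h)%N.
Proof. by case/andP=> /primitive_neq0 nz; rewrite /nrm; case: nz; lia. Qed.

Lemma ler_norm_comb (p q b c y : int) :
  0 <= p * q -> 0 <= b <= c -> 1 <= y -> `|q + b * p| <= `|y * q + c * p|.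
Proof.
move=> pq /andP [b0 bc] y1.
have [[p0 q0]|[p0 q0]] : (0 <= p /\ 0 <= q) \/ (p <= 0 /\ q <= 0).
  by case: (lerP 0 p) => p0; case: (lerP 0 q) => q0; [left|right|right|right]; nia.
- by rewrite !ger0_norm; nia.
- by rewrite !ler0_norm; nia.
Qed.

Section Side.

Variable ccw : bool.

Lemma sdetvv (u : vec) : sdet ccw u u = 0.
Proof. by rewrite /sdet /det; case: ccw; ring. Qed.

Lemma sdet_eq0 (u v : vec) : (sdet ccw u v == 0) = (det u v == 0).
Proof. by rewrite /sdet; case: ccw; rewrite ?oppr_eq0. Qed.

Lemma sdet_cramer (u w v : vec) :
  sdet ccw u w * v.1 = sdet ccw v w * u.1 + sdet ccw u v * w.1 /\
  sdet ccw u w * v.2 = sdet ccw v w * u.2 + sdet ccw u v * w.2.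
Proof. by rewrite /sdet /det; case: ccw; split; ring. Qed.

Lemma sdet_unimodular (u : vec) : primitive u -> exists w, sdet ccw u w = 1.
Proof.
case/primitiveP=> a [b e]; rewrite /sdet /det.
by case: ccw; [exists (-b, a) | exists (b, -a)]; rewrite /=; lia.
Qed.

Lemma sdet1_primitive (u v : vec) : sdet ccw u v = 1 -> primitive v.
Proof.
rewrite /sdet /det => e; apply/primitiveP.
by case: ccw e => e; [exists (- u.2), u.1 | exists u.2, (- u.1)]; lia.
Qed.

Lemma sdet_wvecr (g r : vec) (s : nat) : sdet ccw r (wvec g r s) = sdet ccw r g.
Proof. by rewrite /sdet /det /wvec; case: ccw; rewrite /=; ring. Qed.

Lemma sdet_wvec (g r : vec) (s t : nat) :
  sdet ccw (wvec g r s) (wvec g r t) = (s%:Z - t%:Z) * sdet ccw r g.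
Proof. by rewrite /sdet /det /wvec; case: ccw; rewrite /=; ring. Qed.

Lemma same_ray_primitive (u v : vec) :
  primitive u -> primitive v -> sdet ccw u v = 0 -> 0 < dot u v -> v = u.
Proof.
case/primitiveP=> a [b e] pv /eqP; rewrite sdet_eq0 /det subr_eq0 => /eqP uv du.
pose k := a * v.1 + b * v.2.
have v1 : v.1 = k * u.1.
  have : v.1 * (a * u.1 + b * u.2) - k * u.1 = b * (u.2 * v.1 - u.1 * v.2) by rewrite /k; ring.
  by rewrite e uv subrr mulr0 mulr1 => /eqP; rewrite subr_eq0 => /eqP.
have v2 : v.2 = k * u.2.
  have : v.2 * (a * u.1 + b * u.2) - k * u.2 = a * (u.1 * v.2 - u.2 * v.1) by rewrite /k; ring.
  by rewrite e uv subrr mulr0 mulr1 => /eqP; rewrite subr_eq0 => /eqP.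
have k1 : `|k|%N = 1%N.
  by apply: (primitive_dvd pv); apply/dvdzP; [exists u.1 | exists u.2]; rewrite mulrC.
clearbody k; have [k1'|kN] : k = 1 \/ k = -1 by lia.
  by case: v v1 v2 {pv du k1 uv} => x y /= -> ->; rewrite k1' !mul1r; case: u {e}.
by move: du; rewrite /dot v1 v2 kN; nia.
Qed.

Lemma half_primitive (u v : vec) : primitive u -> primitive v -> v != u ->
  Defs.half ccw u v = if 0 < sdet ccw u v then 0%N else 1%N.
Proof.
move=> pu pv vu; rewrite /Defs.half; case: (0 < sdet ccw u v) => //=.
by case: ifP => // /andP[/eqP s d]; rewrite (same_ray_primitive pu pv s d) eqxx in vu.
Qed.

Definition axes : seq vec := [:: (1, 0); (0, 1); (-1, 0); (0, -1)].

Lemma in_fan_axes (h : nat) (e : vec) : (0 < h)%N -> e \in axes -> in_fan h e.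
Proof. by move=> h0; rewrite !inE => /or4P [] /eqP ->; rewrite /in_fan /primitive /nrm /=. Qed.

Lemma sdet_axis_gt0 (u : vec) :
  u.1 != 0 \/ u.2 != 0 -> exists2 e, e \in axes & 0 < sdet ccw u e.
Proof.
rewrite /sdet /det => nz.
have [[s|s]|[s|s]] : (0 < u.1 \/ u.1 < 0) \/ (0 < u.2 \/ u.2 < 0) by lia.
- by case: ccw; [exists (0, 1) | exists (0, -1)] => //=; lia.
- by case: ccw; [exists (0, -1) | exists (0, 1)] => //=; lia.
- by case: ccw; [exists (-1, 0) | exists (1, 0)] => //=; lia.
- by case: ccw; [exists (1, 0) | exists (-1, 0)] => //=; lia.
Qed.

Lemma axis_between (u v : vec) : u.1 * v.1 < 0 \/ u.2 * v.2 < 0 ->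
  exists2 e, e \in axes & 0 < sdet ccw u e /\ 0 < sdet ccw e v.
Proof.
have opp_signs (x y : int) : x * y < 0 -> 0 < x /\ y < 0 \/ x < 0 /\ 0 < y.
  by case: (ltgtP x 0) => [x0|x0|->]; rewrite ?mul0r ?ltxx // => xy; [right|left]; nia.
rewrite /sdet /det => - [/opp_signs [] s|/opp_signs [] s].
- by case: ccw; [exists (0, 1) | exists (0, -1)] => //=; lia.
- by case: ccw; [exists (0, -1) | exists (0, 1)] => //=; lia.
- by case: ccw; [exists (-1, 0) | exists (1, 0)] => //=; lia.
- by case: ccw; [exists (1, 0) | exists (-1, 0)] => //=; lia.
Qed.

Lemma is_nbrP (h : nat) (r n : vec) : is_nbr ccw h r n <->
  [/\ in_fan h r, in_fan h n, 0 < sdet ccw r n &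
      forall v, in_fan h v -> 0 < sdet ccw r v -> ~~ (0 < sdet ccw v n)].
Proof.
have neq_of_sdet v : 0 < sdet ccw r v -> v != r.
  by apply: contraTneq => ->; rewrite sdetvv.
split.
- case=> fr fn nr nolt; have [pr _] := andP fr; have [pn _] := andP fn.
  have srn : 0 < sdet ccw r n.
    apply: contraT => srn; have [e ax sre] := sdet_axis_gt0 (primitive_neq0 pr).
    have fe := in_fan_axes (in_fan_gt0 fr) ax; have [pe _] := andP fe.
    have er := neq_of_sdet e sre; have := nolt e fe er.
    by rewrite /ang_lt (half_primitive pr pe er) (half_primitive pr pn nr) sre (negbTE srn).
  split=> // v fv srv; apply/negP => svn; have [pv _] := andP fv.
  have vr := neq_of_sdet v srv; have := nolt v fv vr.
  by rewrite /ang_lt (half_primitive pr pv vr) (half_primitive pr pn nr) srv srn svn orbT.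
- case=> fr fn srn between; split=> //; first exact: neq_of_sdet.
  move=> v fv vr; have [pv _] := andP fv; have [pr _] := andP fr; have [pn _] := andP fn.
  rewrite /ang_lt (half_primitive pr pv vr) (half_primitive pr pn (neq_of_sdet n srn)) srn.
  by case: ifP => // srv; rewrite ltnn (negbTE (between v fv srv)).
Qed.

(* With [D := sdet ccw r n > 1], shifting a unimodular partner [g] of [r] by a
   multiple of [r] yields [v] with [D v = rr r + n] and [0 <= rr < D]: for
   [rr = 0] this makes [n] imprimitive, otherwise [v] lies strictly between. *)
Lemma nbr_sdet1 (h : nat) (r n : vec) : is_nbr ccw h r n -> sdet ccw r n = 1.
Proof.
case/is_nbrP=> fr fn srn between; have [pr /nrm_leP [r1 r2]] := andP fr.
have [pn /nrm_leP [n1 n2]] := andP fn.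
set D := sdet ccw r n in srn *; have [//|D2] : D = 1 \/ 1 < D by lia.
have [g srg] := sdet_unimodular pr.
pose q := (sdet ccw g n %/ D)%Z; pose rr := (sdet ccw g n %% D)%Z.
pose v : vec := (g.1 - q * r.1, g.2 - q * r.2).
have srv : sdet ccw r v = 1 by rewrite -srg /v /sdet /det /=; case: ccw; ring.
have svn : sdet ccw v n = rr.
  have -> : sdet ccw v n = sdet ccw g n - q * D by rewrite /D /v /sdet /det /=; case: ccw; ring.
  by rewrite {1}(divz_eq (sdet ccw g n) D) -/q -/rr; ring.
have rr_ge0 : 0 <= rr by apply: modz_ge0; lia.
have rr_lt : rr < D by apply: ltz_pmod.
have [v1 v2] := sdet_cramer r n v; rewrite -/D svn srv mul1r in v1 v2.
have [rr0|rr_gt0] : rr = 0 \/ 0 < rr by lia.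
  have : `|D|%N = 1%N.
    by apply: (primitive_dvd pn); apply/dvdzP; [exists v.1 | exists v.2]; lia.
  lia.
have fv : in_fan h v.
  by rewrite /in_fan (sdet1_primitive srv); apply/nrm_leP; split; nia.
by have := between v fv; rewrite srv svn rr_gt0 => /(_ isT).
Qed.

Lemma nbr_coord_sign (h : nat) (r g : vec) :
  is_nbr ccw h r g -> 0 <= r.1 * g.1 /\ 0 <= r.2 * g.2.
Proof.
case/is_nbrP=> fr _ _ between.
have no_axis_between : ~ exists2 e, e \in axes & 0 < sdet ccw r e /\ 0 < sdet ccw e g.
  case=> e ax [sre seg].
  by have := between e (in_fan_axes (in_fan_gt0 fr) ax) sre; rewrite seg.
by split; rewrite leNgt; apply/negP => neg; apply: no_axis_between; apply: axis_between; auto.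
Qed.

Lemma nbr_wvec (h : nat) (rho gamma nu : vec) :
  sdet ccw rho gamma = 1 -> in_fan h gamma -> is_nbr ccw h rho nu ->
  exists a : nat, nu = wvec gamma rho a /\ (nrm (wvec gamma rho a) <= h)%N /\
    forall s : nat, (a < s)%N -> (h < nrm (wvec gamma rho s))%N.
Proof.
move=> srg fg nb; have srn := nbr_sdet1 nb; case/is_nbrP: nb => _ fn _ between.
have [n1 n2] := sdet_cramer rho gamma nu; rewrite srg srn !mul1r in n1 n2.
move: n1 n2; set s := sdet ccw nu gamma; clearbody s => n1 n2.
have en : nu = (gamma.1 + s * rho.1, gamma.2 + s * rho.2).
  by case: nu n1 n2 {fn between srn} => x y /= -> ->; rewrite !(addrC (s * _)).
have s_ge0 : 0 <= s.
  have sgn : sdet ccw gamma nu = - s * sdet ccw rho gamma.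
    by rewrite en /sdet /det /=; case: ccw; ring.
  by have := between gamma fg; rewrite sgn srg => /(_ ltr01); lia.
exists `|s|%N; have ea : nu = wvec gamma rho `|s|%N by rewrite en /wvec gez0_abs.
split=> //; split; first by rewrite -ea; case/andP: fn.
move=> t lt_st; rewrite ltnNge; apply/negP => ht.
have srt : sdet ccw rho (wvec gamma rho t) = 1 by rewrite sdet_wvecr.
have ft : in_fan h (wvec gamma rho t) by rewrite /in_fan (sdet1_primitive srt) ht.
by have := between _ ft; rewrite srt ea sdet_wvec srg => /(_ isT); lia.
Qed.

Lemma wvec_nbr (h a : nat) (rho gamma : vec) :
  sdet ccw rho gamma = 1 -> 0 <= rho.1 * gamma.1 -> 0 <= rho.2 * gamma.2 ->
  in_fan h rho -> (nrm (wvec gamma rho a) <= h)%N ->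
  (forall s : nat, (a < s)%N -> (h < nrm (wvec gamma rho s))%N) ->
  is_nbr ccw h rho (wvec gamma rho a).
Proof.
move=> srg o1 o2 fr ha hs; set w := wvec gamma rho a.
have srw : sdet ccw rho w = 1 by rewrite sdet_wvecr.
apply/is_nbrP; split=> //; first by rewrite /in_fan (sdet1_primitive srw) ha.
  by rewrite srw.
move=> v /andP [_ hv] srv; apply/negP => svw.
have [v1 v2] := sdet_cramer rho w v; rewrite srw !mul1r in v1 v2.
have coord (p q : int) : 0 <= p * q ->
    `|q + (a.+1)%:Z * p| <= `|sdet ccw v w * p + sdet ccw rho v * (q + a%:Z * p)|.
  move=> pq; rewrite (_ : _ * p + _ =
      sdet ccw rho v * q + (sdet ccw v w + sdet ccw rho v * a%:Z) * p); last by ring.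
  by apply: ler_norm_comb => //; apply/andP; split; nia.
have : (nrm (wvec gamma rho a.+1) <= nrm v)%N.
  by apply: nrm_le_norm; [rewrite v1 | rewrite v2]; exact: coord.
by have := hs a.+1 (ltnSn a); lia.
Qed.

End Side.

Theorem mainTheorem9 (ccw : bool) (rho gamma : vec) :
  primitive rho ->
  is_nbr ccw (nrm rho) rho gamma ->
  forall (h : nat) (nu : vec),
    (nrm rho <= h)%N -> primitive nu ->
    (is_nbr ccw h rho nu <->
     exists a : nat, nu = wvec gamma rho a /\ (nrm (wvec gamma rho a) <= h)%N /\
       forall s : nat, (a < s)%N -> (h < nrm (wvec gamma rho s))%N).
Proof.
move=> pr nbg h nu hh _.
have srg := nbr_sdet1 nbg; have [o1 o2] := nbr_coord_sign nbg.
have [_ /andP [pg ng] _ _] := nbg.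
have fg : in_fan h gamma by rewrite /in_fan pg (leq_trans ng hh).
split; first exact: nbr_wvec.
by case=> a [-> [ha hs]]; apply: wvec_nbr => //; rewrite /in_fan pr.
Qed.
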